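(* Let $(A,\circ)$ be an anti-pre-Lie algebra and define $x\star y=x\circ y-2y\circ x$ for $x,y\in A$. Then $(A,\star)$ is a pre-Lie algebra if and only if $(A,\circ)$ is an admissible Novikov algebra. Moreover, in this case $(A,\star)$ is a Novikov algebra.
   Context: All vector spaces are finite-dimensional over a field $\mathbb F$ of characteristic $0$. A pre-Lie algebra is $(A,\star)$ with $(x\star y)\star z-x\star(y\star z)=(y\star x)\star z-y\star(x\star z)$ for all $x,y,z$; a Novikov algebra is a pre-Lie algebra with additionally $(x\star y)\star z=(x\star z)\star y$. For a bilinear operation $\circ$ write $[x,y]=x\circ y-y\circ x$. An anti-pre-Lie algebra is $(A,\circ)$ such that for all $x,y,z$: (i) $x\circ(y\circ z)-y\circ(x\circ z)=[y,x]\circ z$, and (ii) $[x,y]\circ z+[y,z]\circ x+[z,x]\circ y=0$. An admissible Novikov algebra is $(A,\circ)$ satisfying (i) and $2x\circ[y,z]=(x\circ y)\circ z-(x\circ z)\circ y$. *)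

From HB Require Import structures.
From mathcomp Require Import all_boot all_order all_algebra.
Set Implicit Arguments. Unset Strict Implicit. Unset Printing Implicit Defensive.
Import GRing.Theory.
Local Open Scope ring_scope.

Section Algs.
Variables (F : fieldType) (V : lmodType F).

Definition bilinear_op (op : V -> V -> V) : Prop :=
  (forall a x y z, op (a *: x + y) z = a *: op x z + op y z) /\
  (forall a x y z, op z (a *: x + y) = a *: op z x + op z y).

Definition commutator (op : V -> V -> V) (x y : V) : V := op x y - op y x.

Definition is_preLie (op : V -> V -> V) : Prop :=
  forall x y z, op (op x y) z - op x (op y z) = op (op y x) z - op y (op x z).

Definition is_Novikov (op : V -> V -> V) : Prop :=
  is_preLie op /\ forall x y z, op (op x y) z = op (op x z) y.

Definition is_antiPreLie (op : V -> V -> V) : Prop :=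
  (forall x y z, op x (op y z) - op y (op x z) = op (commutator op y x) z) /\
  (forall x y z, op (commutator op x y) z + op (commutator op y z) x
                 + op (commutator op z x) y = 0).

Definition is_admissibleNovikov (op : V -> V -> V) : Prop :=
  (forall x y z, op x (op y z) - op y (op x z) = op (commutator op y x) z) /\
  (forall x y z, 2%:R *: op x (commutator op y z) = op (op x y) z - op (op x z) y).

Definition star_op (op : V -> V -> V) (x y : V) : V := op x y - 2%:R *: op y x.

End Algs.

(* Write A, C and N for the defects of the first anti-pre-Lie axiom, of the
   cyclic axiom and of the admissible Novikov axiom of a bilinear product o,
   and P, Q for the pre-Lie and right-commutativity defects of
   x * y = x o y - 2 y o x.  Modulo A and C, that is, in any anti-pre-Lie
   algebra,
     P(x,y,z) = 2 (N(x,y,z) - N(y,x,z)),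
     2 N(x,y,z) = P(x,y,z) - P(x,z,y),
     Q(x,y,z) = N(x,y,z).
   Hence when 2 is invertible P vanishes exactly when N does, and then Q
   vanishes too. *)

From HB Require Import structures.
From mathcomp Require Import all_boot all_order all_algebra.
From mathcomp Require Import ring.
Import GRing.Theory.
Local Open Scope ring_scope.
Set Implicit Arguments.
Unset Strict Implicit.

Section Defects.
Variables (F : fieldType) (V : lmodType F).
Implicit Types (mul op : V -> V -> V) (x y z : V).

Definition preLie_defect mul x y z :=
  mul (mul x y) z - mul x (mul y z) - (mul (mul y x) z - mul y (mul x z)).

Definition rcomm_defect mul x y z := mul (mul x y) z - mul (mul x z) y.

Definition antiPreLie_defect op x y z :=
  op x (op y z) - op y (op x z) - op (commutator op y x) z.

Definition cyclic_defect op x y z :=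
  op (commutator op x y) z + op (commutator op y z) x + op (commutator op z x) y.

Definition admissible_defect op x y z :=
  2%:R *: op x (commutator op y z) - (op (op x y) z - op (op x z) y).

Lemma preLieP mul : is_preLie mul <-> forall x y z, preLie_defect mul x y z = 0.
Proof.
split=> PL x y z; first by rewrite /preLie_defect PL subrr.
exact: subr0_eq (PL x y z).
Qed.

Lemma NovikovP mul :
  is_Novikov mul <->
  (forall x y z, preLie_defect mul x y z = 0) /\
  (forall x y z, rcomm_defect mul x y z = 0).
Proof.
split=> -[PL RC]; split; try exact/preLieP.
  by move=> x y z; rewrite /rcomm_defect RC subrr.
by move=> x y z; exact: subr0_eq (RC x y z).
Qed.

Lemma antiPreLieP op :
  is_antiPreLie op <->
  (forall x y z, antiPreLie_defect op x y z = 0) /\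
  (forall x y z, cyclic_defect op x y z = 0).
Proof.
split=> -[APL CYC]; split=> // x y z.
  by rewrite /antiPreLie_defect APL subrr.
exact: subr0_eq (APL x y z).
Qed.

Lemma admissibleNovikovP op :
  is_admissibleNovikov op <->
  (forall x y z, antiPreLie_defect op x y z = 0) /\
  (forall x y z, admissible_defect op x y z = 0).
Proof.
split=> -[APL ADM]; split=> x y z.
- by rewrite /antiPreLie_defect APL subrr.
- by rewrite /admissible_defect ADM subrr.
- exact: subr0_eq (APL x y z).
- exact: subr0_eq (ADM x y z).
Qed.

End Defects.

Section Coordinates.
Variables (F : fieldType) (V : vectType F).

Lemma coord_vbasis_inj (u w : V) :
  (forall i, coord (vbasis fullv) i u = coord (vbasis fullv) i w) -> u = w.
Proof.
move=> eq_uw; rewrite (coord_vbasis (memvf u)) (coord_vbasis (memvf w)).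
by apply: eq_bigr => i _; rewrite eq_uw.
Qed.

(* Instances of linearD, linearN and linearZ: rewriting with these is an order
   of magnitude faster than with the generic lemmas. *)
Lemma coordD n (X : n.-tuple V) i u w :
  coord X i (u + w) = coord X i u + coord X i w.
Proof. exact: linearD. Qed.
Lemma coordN n (X : n.-tuple V) i u : coord X i (- u) = - coord X i u.
Proof. exact: linearN. Qed.
Lemma coordZ n (X : n.-tuple V) i a u : coord X i (a *: u) = a * coord X i u.
Proof. exact: linearZ. Qed.

End Coordinates.

Section BilinearIdentities.
Variables (F : fieldType) (V : vectType F) (op : V -> V -> V).
Hypothesis op_bilinear : bilinear_op op.

Let op_left (z : V) : {linear V -> V} :=
  HB.pack (op^~ z)
    (GRing.isLinear.Build F V V *:%R (op^~ z)
       (fun a x y => proj1 op_bilinear a x y z)).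
Let op_right (x : V) : {linear V -> V} :=
  HB.pack (op x)
    (GRing.isLinear.Build F V V *:%R (op x)
       (fun a y z => proj2 op_bilinear a y z x)).

Lemma opDl x y z : op (x + y) z = op x z + op y z.
Proof. exact: (linearD (op_left z)). Qed.
Lemma opNl x z : op (- x) z = - op x z.
Proof. exact: (linearN (op_left z)). Qed.
Lemma opZl a x z : op (a *: x) z = a *: op x z.
Proof. exact: (linearZZ (op_left z)). Qed.
Lemma opDr x y z : op x (y + z) = op x y + op x z.
Proof. exact: (linearD (op_right x)). Qed.
Lemma opNr x y : op x (- y) = - op x y.
Proof. exact: (linearN (op_right x)). Qed.
Lemma opZr a x y : op x (a *: y) = a *: op x y.
Proof. exact: (linearZZ (op_right x)). Qed.

Local Notation A := (antiPreLie_defect op).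
Local Notation C := (cyclic_defect op).
Local Notation N := (admissible_defect op).
Local Notation star := (star_op op).

(* Both sides expand into combinations of the twelve monomials (a o b) o c and
   a o (b o c), with (a, b, c) a permutation of (x, y, z), so each identity is
   checked coordinatewise by ring.  The coefficients were found by solving that
   linear system. *)
Ltac bilinear_identity :=
  rewrite /preLie_defect /rcomm_defect /antiPreLie_defect /cyclic_defect
    /admissible_defect /star_op /commutator !(opDl, opNl, opZl, opDr, opNr, opZr);
  apply: coord_vbasis_inj => i; rewrite !(coordD, coordN, coordZ); ring.

Lemma star_preLie_defectE x y z :
  preLie_defect star x y z =
  2%:R *: (N x y z - N y x z)
  - 5%:R *: A x y z + 6%:R *: A x z y - 6%:R *: A y z x + 10%:R *: C x y z.
Proof. bilinear_identity. Qed.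

Lemma admissible_defect_starE x y z :
  2%:R *: N x y z =
  preLie_defect star x y z - preLie_defect star x z y
  + 7%:R *: A x y z - 7%:R *: A x z y + 8%:R *: A y z x - 14%:R *: C x y z.
Proof. bilinear_identity. Qed.

Lemma star_rcomm_defectE x y z :
  rcomm_defect star x y z =
  N x y z - 2%:R *: A x y z + 2%:R *: A x z y - 4%:R *: A y z x + 4%:R *: C x y z.
Proof. bilinear_identity. Qed.

End BilinearIdentities.

Section AntiPreLie.
Variables (F : fieldType) (V : vectType F) (op : V -> V -> V).
Hypotheses (op_bilinear : bilinear_op op) (op_antiPreLie : is_antiPreLie op).
Hypothesis two_neq0 : 2%:R != 0 :> F.

Let apl0 : forall x y z, antiPreLie_defect op x y z = 0 :=
  proj1 (proj1 (antiPreLieP op) op_antiPreLie).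
Let cyc0 : forall x y z, cyclic_defect op x y z = 0 :=
  proj2 (proj1 (antiPreLieP op) op_antiPreLie).

Lemma star_preLie_admissible :
  is_preLie (star_op op) -> forall x y z, admissible_defect op x y z = 0.
Proof.
move=> /preLieP PL x y z; apply: (scalerI two_neq0).
rewrite (admissible_defect_starE op_bilinear).
by rewrite !(PL, apl0, cyc0, scaler0, subrr, addr0).
Qed.

Lemma star_preLie_iff_admissibleNovikov :
  is_preLie (star_op op) <-> is_admissibleNovikov op.
Proof.
split=> [/star_preLie_admissible ADM | /admissibleNovikovP[_ ADM]].
  exact/admissibleNovikovP.
apply/preLieP => x y z.
rewrite (star_preLie_defectE op_bilinear).
by rewrite !(ADM, apl0, cyc0, scaler0, subrr, addr0).
Qed.

Lemma star_preLie_Novikov : is_preLie (star_op op) -> is_Novikov (star_op op).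
Proof.
move=> star_preLie; apply/NovikovP; split; first exact/preLieP.
move=> x y z; rewrite (star_rcomm_defectE op_bilinear).
rewrite (star_preLie_admissible star_preLie).
by rewrite !(apl0, cyc0, scaler0, subrr, addr0).
Qed.

End AntiPreLie.

Theorem proposition3p6 (F : fieldType) (V : vectType F)
  (op : V -> V -> V) :
  [pchar F] =i pred0 ->
  bilinear_op op ->
  is_antiPreLie op ->
  (is_preLie (star_op op) <-> is_admissibleNovikov op) /\
  (is_preLie (star_op op) -> is_Novikov (star_op op)).
Proof.
move=> /pcharf0P charF0 op_bilinear op_antiPreLie.
have two_neq0 : 2%:R != 0 :> F by rewrite charF0.
split; [exact: star_preLie_iff_admissibleNovikov | exact: star_preLie_Novikov].
Qed.
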